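(* Let $R$ be a ring and $n\in\mathbb{N}$. Then: (1) If $r\in J(R)$, then the unit $1+r$ has exactly one clean decomposition (i.e. exactly one way of writing it as $e+u$ with $e$ idempotent and $u$ a unit). (2) Suppose $U(R)=1+J(R)$. Then $R$ is $n$-torsion clean if and only if $R$ is clean and $U(R)$ has finite exponent $n$; likewise, $R$ is strongly $n$-torsion clean if and only if $R$ is strongly clean and $U(R)$ has finite exponent $n$. Moreover, if $U(R)=1+J(R)$ and one of these equivalent conditions holds, then $R/J(R)$ is a boolean ring.
   Context: All rings are associative with identity. $U(R)$ is the unit group and $J(R)$ the Jacobson radical. A ring is clean (resp. strongly clean) if every element is $e+u$ with $e$ idempotent, $u$ a unit (resp. additionally $eu=ue$). A ring $R$ is (strongly) $n$-torsion clean if every $r\in R$ can be written $r=e+u$ with $e^2=e$, $u\in U(R)$, $u^n=1$ (and $eu=ue$ in the strong case), and $n$ is the smallest natural number with this property. *)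

From HB Require Import structures.
From mathcomp Require Import all_boot all_order all_algebra.
Set Implicit Arguments. Unset Strict Implicit. Unset Printing Implicit Defensive.
Import GRing.Theory.
Local Open Scope ring_scope.

Definition idempotent_el (R : unitRingType) (e : R) : Prop := e * e = e.

Definition left_ideal (R : unitRingType) (I : R -> Prop) : Prop :=
  [/\ I 0, (forall a b, I a -> I b -> I (a + b)) & (forall x a, I a -> I (x * a))].

Definition maximal_left_ideal (R : unitRingType) (I : R -> Prop) : Prop :=
  [/\ left_ideal I, ~ I 1 &
      forall K : R -> Prop, left_ideal K -> ~ K 1 ->
        (forall a, I a -> K a) -> forall a, K a -> I a].

Definition jacobson (R : unitRingType) (r : R) : Prop :=
  forall I : R -> Prop, maximal_left_ideal I -> I r.

Definition clean_decomp (R : unitRingType) (r e u : R) : Prop :=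
  [/\ idempotent_el e, u \is a GRing.unit & r = e + u].

Definition clean (R : unitRingType) : Prop :=
  forall r : R, exists e u, clean_decomp r e u.

Definition strongly_clean (R : unitRingType) : Prop :=
  forall r : R, exists e u, clean_decomp r e u /\ e * u = u * e.

Definition torsion_clean_prop (R : unitRingType) (n : nat) : Prop :=
  forall r : R, exists e u, clean_decomp r e u /\ u ^+ n = 1.

Definition strongly_torsion_clean_prop (R : unitRingType) (n : nat) : Prop :=
  forall r : R, exists e u, [/\ clean_decomp r e u, e * u = u * e & u ^+ n = 1].

Definition n_torsion_clean (R : unitRingType) (n : nat) : Prop :=
  [/\ (0 < n)%N, torsion_clean_prop R n &
      forall m, (0 < m)%N -> torsion_clean_prop R m -> (n <= m)%N].

Definition strongly_n_torsion_clean (R : unitRingType) (n : nat) : Prop :=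
  [/\ (0 < n)%N, strongly_torsion_clean_prop R n &
      forall m, (0 < m)%N -> strongly_torsion_clean_prop R m -> (n <= m)%N].

Definition units_killed_by (R : unitRingType) (n : nat) : Prop :=
  forall u : R, u \is a GRing.unit -> u ^+ n = 1.

Definition units_exponent (R : unitRingType) (n : nat) : Prop :=
  [/\ (0 < n)%N, units_killed_by R n &
      forall m, (0 < m)%N -> units_killed_by R m -> (n <= m)%N].

Definition units_eq_1_plus_J (R : unitRingType) : Prop :=
  forall x : R, x \is a GRing.unit <-> exists j, jacobson j /\ x = 1 + j.

(* R/J(R) is boolean: every coset is idempotent, i.e. x^2 - x in J(R) *)
Definition quotient_by_J_boolean (R : unitRingType) : Prop :=
  forall x : R, jacobson (x * x - x).

From mathcomp Require Import all_boot all_order all_algebra.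
From mathcomp Require Import boolp classical_sets.
Set Implicit Arguments. Unset Strict Implicit. Unset Printing Implicit Defensive.
Import GRing.Theory.
Local Open Scope classical_set_scope.
Local Open Scope ring_scope.

(* (1) If [1 + r = e + u] with [r] in J(R), then [1 - e = u (1 - u^-1 r)] is an
   idempotent unit, hence equal to 1, so [e = 0].
   (2) If U(R) = 1 + J(R), then by (1) a unit [u] has only the decomposition
   [0 + u]; so asking the unit parts of all clean decompositions to satisfy
   [u ^+ n = 1] is the same as asking it of all units, and the minimality
   clauses match.  Moreover [-1 = 1 + j] puts [2] in J(R), and writing
   [x = e + (1 + j)] gives [x^2 - x = 2 e + j e + x j], which lies in J(R)
   because J(R) is a two-sided ideal. *)

Section MaximalLeftIdeals.
Variable R : unitRingType.

Lemma left_ideal_bigcup (F : set (set R)) :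
  F !=set0 -> total_on F subset -> (forall X, F X -> left_ideal X) ->
  left_ideal (\bigcup_(X in F) X).
Proof.
move=> [X0 FX0] Ftot Fid; split.
- by exists X0 => //; case: (Fid X0 FX0).
- move=> a b [X FX Xa] [Y FY Yb].
  have [XY|YX] := Ftot X Y FX FY.
  + by exists Y => //; case: (Fid Y FY) => _ + _; apply => //; apply: XY.
  + by exists X => //; case: (Fid X FX) => _ + _; apply => //; apply: YX.
- by move=> x a [X FX Xa]; exists X => //; case: (Fid X FX) => _ _; apply.
Qed.

Lemma exists_maximal_left_ideal (I0 : set R) :
  left_ideal I0 -> ~ I0 1 -> exists M, maximal_left_ideal M /\ I0 `<=` M.
Proof.
move=> I0id I0N1.
pose proper_above A := [/\ left_ideal A, ~ A 1 & I0 `<=` A].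
(* [set0] is admitted so that the empty chain has an upper bound. *)
have [F FP Ftot|M [[M0|PM] Mmax]] :=
  @Zorn_bigcup R (fun A => A = set0 \/ proper_above A).
- have [[Y0 [FY0 PY0]]|noP] := pselect (exists X, F X /\ proper_above X); last first.
    left; apply/seteqP; split=> a // [X FX Xa].
    case: (FP X FX) => [X0|PX]; first by rewrite X0 in Xa.
    by case: noP; exists X.
  have -> : \bigcup_(X in F) X = \bigcup_(X in F `&` proper_above) X.
    apply/seteqP; split=> a [X FX Xa]; last by exists X => //; case: FX.
    exists X => //; split => //.
    by case: (FP X FX) => // X0; rewrite X0 in Xa.
  right; split.
  + apply: left_ideal_bigcup; first by exists Y0.
      by move=> X Y [FX _] [FY _]; apply: Ftot.
    by move=> X [_ []].
  + by case=> X [_ []].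
  + by case: (PY0) => _ _ I0Y0 a I0a; exists Y0; [split | apply: I0Y0].
- have I0_proper : proper_above I0 by split.
  case: (Mmax I0 _ (or_intror I0_proper)).
  rewrite M0; split; first exact: sub0set.
  by move/(_ 0); apply; case: I0id.
- exists M; case: PM => Mid M1 I0M; split => //; split => // K Kid K1 MK a Ka.
  apply: contrapT => Ma; apply: (Mmax K); first by split => // /(_ a Ka).
  by right; split => // b /I0M /MK.
Qed.

End MaximalLeftIdeals.

Section Jacobson.
Variable R : unitRingType.
Implicit Types a b c r x : R.

Lemma jacobsonD a b : jacobson a -> jacobson b -> jacobson (a + b).
Proof.
by move=> Ja Jb M maxM; case: (maxM) => [[_ MD _] _ _]; apply: MD; [exact: Ja | exact: Jb].
Qed.

Lemma jacobsonMl x a : jacobson a -> jacobson (x * a).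
Proof. by move=> Ja M maxM; case: (maxM) => [[_ _ MMl] _ _]; apply: MMl; exact: Ja. Qed.

Lemma jacobsonN a : jacobson a -> jacobson (- a).
Proof. by move=> Ja; rewrite -mulN1r; apply: jacobsonMl. Qed.

Lemma jacobson_left_inv r : jacobson r -> exists y, y * (1 + r) = 1.
Proof.
move=> Jr; apply: contrapT => noinv.
pose I0 a := exists y, a = y * (1 + r).
have I0id : left_ideal I0.
  split=> [|_ _ [y ->] [z ->]|x _ [y ->]].
  - by exists 0; rewrite mul0r.
  - by exists (y + z); rewrite mulrDl.
  - by exists (x * y); rewrite mulrA.
have I0N1 : ~ I0 1 by case=> y /esym y1; apply: noinv; exists y.
have [M [maxM I0M]] := exists_maximal_left_ideal I0id I0N1.
have Mr := Jr M maxM; case: maxM => [[_ MD MMl] M1 _].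
apply: M1; rewrite -(addrK r 1); apply: MD; first by apply: I0M; exists 1; rewrite mul1r.
by rewrite -mulN1r; apply: MMl.
Qed.

Lemma jacobson_unit1D r : jacobson r -> (1 + r) \is a GRing.unit.
Proof.
move=> Jr; have [y yr1] := jacobson_left_inv Jr.
have y_1D : y = 1 + - (y * r) by rewrite -yr1 mulrDr mulr1 addrK.
have [z zy1] : exists z, z * y = 1.
  by rewrite y_1D; apply: jacobson_left_inv; apply: jacobsonN; exact: jacobsonMl.
have z_1D : z = 1 + r by rewrite -[LHS]mulr1 -{1}yr1 mulrA zy1 mul1r.
by apply/unitrP; exists y; split; last rewrite -z_1D.
Qed.

(* [(1 + c b)^-1 = 1 - c (1 + b c)^-1 b] *)
Lemma unit_1DM_swap b c : (1 + b * c) \is a GRing.unit -> (1 + c * b) \is a GRing.unit.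
Proof.
set w := (1 + b * c)^-1 => Ubc; apply/unitrP; exists (1 - c * w * b); split.
  rewrite mulrBl mul1r.
  have -> : c * w * b * (1 + c * b) = c * (w * (1 + b * c)) * b.
    by rewrite !(mulrDl, mulrDr, mul1r, mulr1, mulrA).
  by rewrite mulVr // mulr1 addrK.
rewrite mulrBr mulr1.
have -> : (1 + c * b) * (c * w * b) = c * ((1 + b * c) * w) * b.
  by rewrite !(mulrDl, mulrDr, mul1r, mulr1, mulrA).
by rewrite mulrV // mulr1 addrK.
Qed.

Lemma jacobsonP a : jacobson a <-> forall x, (1 + x * a) \is a GRing.unit.
Proof.
split=> [Ja x|unit_1DM]; first by apply/jacobson_unit1D; exact: jacobsonMl.
move=> M [[M0 MD MMl] M1 maxM]; apply: contrapT => Ma.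
pose K b := exists2 m, M m & exists y, b = m + y * a.
have Kid : left_ideal K.
  split=> [|_ _ [m Mm [y ->]] [m' Mm' [y' ->]]|x _ [m Mm [y ->]]].
  - by exists 0 => //; exists 0; rewrite mul0r addr0.
  - by exists (m + m'); [exact: MD | exists (y + y'); rewrite mulrDl addrACA].
  - by exists (x * m); [exact: MMl | exists (x * y); rewrite mulrDr mulrA].
have [m Mm [y one_my]] : K 1.
  apply: contrapT => K1; apply: Ma; apply: (maxM K) => // [b Mb|].
    by exists b => //; exists 0; rewrite mul0r addr0.
  by exists 0 => //; exists 1; rewrite mul1r add0r.
have Um : m \is a GRing.unit.
  by have -> : m = 1 + (- y) * a by rewrite one_my mulNr addrK.
by apply: M1; rewrite -(mulVr Um); apply: MMl.
Qed.

Lemma jacobsonMr a x : jacobson a -> jacobson (a * x).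
Proof.
move/jacobsonP=> Ja; apply/jacobsonP => y.
by rewrite mulrA; apply: unit_1DM_swap; rewrite mulrA; apply: Ja.
Qed.

End Jacobson.

Section CleanDecompositions.
Variable R : unitRingType.
Implicit Types e r u : R.

Lemma idempotent_el_1B e : idempotent_el e -> idempotent_el (1 - e).
Proof. by rewrite /idempotent_el mulrBl mul1r mulrBr mulr1 => ->; rewrite subrr subr0. Qed.

Lemma idempotent_unit_eq1 e : idempotent_el e -> e \is a GRing.unit -> e = 1.
Proof. by move=> ee Ue; rewrite -[LHS](mulKr Ue) ee mulVr. Qed.

Lemma clean_decomp0 u : u \is a GRing.unit -> clean_decomp u 0 u.
Proof. by split; rewrite ?add0r // /idempotent_el mulr0. Qed.

Lemma jacobson_clean_decompE r e u :
  jacobson r -> clean_decomp (1 + r) e u -> e = 0 /\ u = 1 + r.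
Proof.
move=> Jr [ee Uu ru].
have u_def : u = 1 + r - e by rewrite ru addrC addKr.
have one_sub_e : 1 - e = u * (1 + (- u^-1) * r).
  by rewrite mulrDr mulr1 mulNr mulrN mulVKr // u_def addrAC addrK.
have e1 : 1 - e = 1.
  apply: idempotent_unit_eq1; first exact: idempotent_el_1B.
  by rewrite one_sub_e unitrMr //; apply/jacobson_unit1D; exact: jacobsonMl.
have e0 : e = 0 by apply: oppr_inj; apply: (addrI 1); rewrite e1 oppr0 addr0.
by split=> //; rewrite ru e0 add0r.
Qed.

Lemma strongly_clean_clean : strongly_clean R -> clean R.
Proof. by move=> scR r; have [e [u [reu _]]] := scR r; exists e, u. Qed.

End CleanDecompositions.

Section UnitsJacobson.
Variable R : unitRingType.
Hypothesis unitsJ : units_eq_1_plus_J R.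

Lemma unit_clean_decompE (u e v : R) :
  u \is a GRing.unit -> clean_decomp u e v -> e = 0 /\ v = u.
Proof. by move=> /(proj1 (unitsJ u)) [j [Jj ->]]; apply: jacobson_clean_decompE. Qed.

Lemma torsion_clean_propE m :
  torsion_clean_prop R m <-> clean R /\ units_killed_by R m.
Proof.
split=> [tcR|[cR killed] r].
  split=> [r|u Uu]; first by have [e [u [reu _]]] := tcR r; exists e, u.
  by have [e [v [/(unit_clean_decompE Uu) [_ ->]]]] := tcR u.
have [e [u reu]] := cR r; exists e, u; split => //.
by apply: killed; case: reu.
Qed.

Lemma strongly_torsion_clean_propE m :
  strongly_torsion_clean_prop R m <-> strongly_clean R /\ units_killed_by R m.
Proof.
split=> [tcR|[cR killed] r].
  split=> [r|u Uu]; first by have [e [u [reu eu _]]] := tcR r; exists e, u.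
  by have [e [v [/(unit_clean_decompE Uu) [_ ->]]]] := tcR u.
have [e [u [reu eu]]] := cR r; exists e, u; split => //.
by apply: killed; case: reu.
Qed.

Lemma jacobson2 : jacobson (1 + 1 : R).
Proof.
have [j [Jj N1_1D]] := proj1 (unitsJ (-1)) (unitrN1 R).
have -> : (1 + 1 : R) = - j by rewrite -[j](addKr 1) -N1_1D opprD opprK.
exact: jacobsonN.
Qed.

Lemma clean_quotient_by_J_boolean : clean R -> quotient_by_J_boolean R.
Proof.
move=> cR x; have [e [u [ee Uu xeu]]] := cR x.
have [j [Jj u_1D]] := proj1 (unitsJ u) Uu.
have -> : x * x - x = e * (1 + 1) + j * e + x * j.
  have x_1B : x - 1 = e + j by rewrite xeu u_1D addrCA [1 + _]addrC addrK.
  rewrite -{3}[x]mulr1 -mulrBr x_1B mulrDr; congr (_ + _).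
  by rewrite {1}xeu u_1D mulrDl mulrDl mul1r ee mulrDr mulr1 addrA.
apply: jacobsonD; last exact: jacobsonMl.
by apply: jacobsonD; [apply: jacobsonMl; exact: jacobson2 | exact: jacobsonMr].
Qed.

End UnitsJacobson.

Definition least_pos (P : nat -> Prop) (n : nat) : Prop :=
  [/\ (0 < n)%N, P n & forall m, (0 < m)%N -> P m -> (n <= m)%N].

Lemma least_pos_and (Q : Prop) (P K : nat -> Prop) n :
  (forall m, P m <-> Q /\ K m) -> least_pos P n <-> Q /\ least_pos K n.
Proof.
move=> PE; split=> [[n0 /PE [q Kn] minP]|[q [n0 Kn minK]]].
  by split=> //; split=> // m m0 Km; apply: minP => //; apply/PE.
by split=> //; [apply/PE | move=> m m0 /PE [_]; apply: minK].
Qed.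

Theorem proposition1p2 (R : unitRingType) (n : nat) :
  (forall r : R, jacobson r ->
     exists! p : R * R, clean_decomp (1 + r) p.1 p.2)
  /\
  (units_eq_1_plus_J R ->
     (n_torsion_clean R n <-> clean R /\ units_exponent R n)
     /\ (strongly_n_torsion_clean R n <-> strongly_clean R /\ units_exponent R n)
     /\ ((n_torsion_clean R n \/ (clean R /\ units_exponent R n)
          \/ strongly_n_torsion_clean R n \/ (strongly_clean R /\ units_exponent R n))
         -> quotient_by_J_boolean R)).
Proof.
split=> [r Jr|unitsJ].
  exists (0, 1 + r); split; first exact/clean_decomp0/jacobson_unit1D.
  by case=> e u /= /(jacobson_clean_decompE Jr) [-> ->].
have torsionE := least_pos_and n (torsion_clean_propE unitsJ).
have strongE := least_pos_and n (strongly_torsion_clean_propE unitsJ).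
split; first exact: torsionE.
split; first exact: strongE.
move=> cleanR; apply: clean_quotient_by_J_boolean unitsJ _.
by case: cleanR => [/torsionE[]|[[]|[/strongE[/strongly_clean_clean]|[/strongly_clean_clean]]]].
Qed.
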